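(* Let $p$ be an odd prime and let $G_p=W_p/Z(W_p)$, where $W_p=C_2\wr C_p$. Then $\mathrm{diam}_{\max}(G_p)\le \frac{13}{2}(p-1)$.
   Context: The wreath product $W_p=C_2\wr C_p$ is $U\rtimes C_p$ with $U=\mathbb{F}_2^{\,p}$ and a generator of the cyclic group $C_p$ acting by cyclically permuting coordinates. Its center is $Z(W_p)=\{(0,\dots,0),(1,\dots,1)\}$ (of order 2), so $G_p=V\rtimes C$ where $V=U/Z(W_p)$ has dimension $p-1$ over $\mathbb{F}_2$ and $C$ is cyclic of order $p$. For a finite group $G$ and generating set $X$, $\mathrm{diam}(G,X)$ is the smallest $k$ such that every element of $G$ is a product of at most $k$ elements of $X\cup X^{-1}$ (the diameter of the undirected Cayley graph), and $\mathrm{diam}_{\max}(G)=\max\{\mathrm{diam}(G,X): X\subseteq G,\ \langle X\rangle=G\}$. *)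

From mathcomp Require Import all_boot all_order all_fingroup all_solvable.
Set Implicit Arguments.
Unset Strict Implicit.
Unset Printing Implicit Defensive.
Local Open Scope group_scope.

Section Diameter.
Variable gT : finGroupType.

Fixpoint ball (X : {set gT}) (k : nat) : {set gT} :=
  if k is k'.+1 then ball X k' :|: ball X k' * (X :|: X^-1) else [set 1].

(* diam(G,X): least k with G contained in ball X k (defaults to #|G| if none,
   which never happens when <<X>> = G) *)
Definition diam (G : {set gT}) (X : {set gT}) : nat :=
  \big[minn/#|G|]_(k < #|G|.+1 | G \subset ball X k) k.

Definition diam_max (G : {set gT}) : nat :=
  \max_(X : {set gT} | (X \subset G) && (<<X>> == G)) diam G X.
End Diameter.

(* W_p is realized as its faithful permutation action on 'I_p * bool
   (p blocks of size 2): generated by the flip in block 0 and the cyclic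
   rotation of the blocks. *)
Section Wreath.
Variable p : nat.

Definition flip0_fun (x : 'I_p * bool) : 'I_p * bool :=
  (x.1, x.2 (+) (nat_of_ord x.1 == 0)).

Lemma flip0_inv : involutive flip0_fun.
Proof. by case=> i b; rewrite /flip0_fun /= addbK. Qed.

Definition flip0 : {perm 'I_p * bool} := perm (inv_inj flip0_inv).

Definition rot_fun (x : 'I_p * bool) : 'I_p * bool := (ordS x.1, x.2).

Lemma rot_inj : injective rot_fun.
Proof.
move=> [i b] [j c] H.
have E1 : ordS i = ordS j := congr1 fst H.
have E2 : b = c := congr1 snd H.
by rewrite (ordS_inj E1) E2.
Qed.

Definition rot : {perm 'I_p * bool} := perm rot_inj.

Definition W : {group {perm 'I_p * bool}} := <<[set flip0; rot]>>%G.

Definition Gp := (W / 'Z(W))%G.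
End Wreath.

(* G_p is an extension of the elementary abelian 2-group V = (W_p :&: C_2^p) / Z(W_p)
   by a cyclic group of order p, so every generating set X contains an x (or x = 1)
   with G_p = V <x> and #[x] dividing 2p.  Call an x-invariant U <= V k-covered if
   |U| >= 2^k and every element of U is within distance 2k of <x>.  If U < V, some
   generator y = v z has v in V \ U and z in <x>; the chain
   U <= U<v> <= U<v, v^(x^-1)> <= ... stops at an x-invariant U' with |U'| >= 2^m |U|,
   and walking along x^m while inserting y or y^-1 reaches all of U' with 2m extra
   letters, so U' is (k+m)-covered.  Hence V is within 2 log2 |V| <= 2p of <x>, and
   diam(G_p, X) <= 2p + (2p - 1) <= 13 (p - 1) / 2. *)

From mathcomp Require Import all_boot all_order all_fingroup all_solvable.
From mathcomp Require Import zify.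
(* Imported last, so that [rot] is the rotation of Defs and not [seq.rot]. *)
From Pilot Require Import Defs.
Set Implicit Arguments.
Unset Strict Implicit.
Unset Printing Implicit Defensive.

Local Open Scope group_scope.

Section Balls.
Variables (gT : finGroupType) (X : {set gT}).
Implicit Types (g s : gT) (m n : nat).

Lemma ballS n : ball X n \subset ball X n.+1.
Proof. exact: subsetUl. Qed.

Lemma ball_mono m n : m <= n -> ball X m \subset ball X n.
Proof.
move=> /subnK <-; elim: (n - m) => [|k IHk]; first by rewrite add0n.
by rewrite addSn (subset_trans IHk (ballS _)).
Qed.

Lemma mem_ball1 n : 1 \in ball X n.
Proof. by apply: subsetP (ball_mono (leq0n n)) _ _; rewrite set11. Qed.

Lemma mem_ballMr n g s : g \in ball X n -> s \in X :|: X^-1 -> g * s \in ball X n.+1.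
Proof. by move=> Bg Ss; rewrite /= inE mem_mulg ?orbT. Qed.

Lemma mulg_ball m n : ball X m * ball X n \subset ball X (m + n).
Proof.
elim: n => [|n IHn]; first by rewrite addn0 /= mulg1.
by rewrite addnS /= mulgU mulgA setUSS // mulSg.
Qed.

Lemma cycle_sub_ball g : g \in 1 |: X -> <[g]> \subset ball X #[g].-1.
Proof.
move=> Xg; have Bg : g \in ball X 1.
  case/setU1P: Xg => [->|Xg]; first exact: mem_ball1.
  by rewrite -[g]mul1g mem_ballMr ?mem_ball1 // inE Xg.
have Bgi i : g ^+ i \in ball X i.
  elim: i => [|i IHi]; first by rewrite mem_ball1.
  by rewrite expgSr -addn1 (subsetP (mulg_ball i 1)) ?mem_mulg.
apply/subsetP => _ /cyclePmin[i lt_i_g ->].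
by apply: subsetP (ball_mono _) _ (Bgi i); rewrite -ltnS (ltn_predK lt_i_g).
Qed.

Lemma diam_le (G : {set gT}) k : G \subset ball X k -> diam G X <= k.
Proof.
move=> sGB; rewrite /diam; case: (leqP k #|G|) => [le_kG | lt_Gk].
  have kG : Ordinal (le_kG : k < #|G|.+1) \in index_enum 'I_#|G|.+1.
    exact: mem_index_enum.
  elim: (index_enum _) kG => // i r IHr.
  rewrite inE big_cons => /predU1P[<- | /IHr le_r_k]; first by rewrite sGB geq_minl.
  by case: ifP => // _; rewrite geq_min le_r_k orbT.
apply: leq_trans (ltnW lt_Gk).
apply: (big_ind (fun r => r <= #|G|)) => // [a b le_a _ | i _].
  by rewrite geq_min le_a.
by rewrite -ltnS ltn_ord.
Qed.

End Balls.

Section AbelemExtension.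
Variables (gT : finGroupType) (V : {group gT}) (X : {set gT}) (x : gT).
Hypotheses (abelV : 2.-abelem V) (nVx : x \in 'N(V)) (Xx : x \in 1 |: X).

Let cVV : abelian V := abelem_abelian abelV.

Let sqrV v : v \in V -> v ^+ 2 = 1.
Proof. by case/(abelemP (isT : prime 2)): abelV => _; apply. Qed.

Let invV v : v \in V -> v^-1 = v.
Proof. by move/sqrV => v2; apply/eqP; rewrite eq_invg_mul -expg2 v2. Qed.

Lemma mem_ballMx n g : g \in ball X n -> g * x \in ball X n.+1.
Proof.
case/setU1P: Xx => [-> | Xx1] Bg; first by rewrite mulg1 (subsetP (ballS _ _)).
by rewrite mem_ballMr // inE Xx1.
Qed.

Definition covered (U : {set gT}) k :=
  (2 ^ k <= #|U|) && (U \subset ball X (2 * k) * <[x]>).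

Section Chain.
Variables (U : {group gT}) (v z : gT).
Hypotheses (sUV : U \subset V) (nUx : x \in 'N(U)).
Hypotheses (Vv : v \in V) (zx : z \in <[x]>) (Xvz : v * z \in X).

Definition twist s := v ^ (x ^- s).

Fixpoint chain m : {group gT} :=
  if m is m'.+1 then (chain m' <*> <[twist m']>)%G else U.

Lemma twist_in s : twist s \in V.
Proof. by rewrite memJ_norm // groupV groupX. Qed.

Lemma twist0 : twist 0 = v.
Proof. by rewrite /twist expg0 invg1 conjg1. Qed.

Lemma twist_order : twist #[x] = v.
Proof. by rewrite /twist expg_order invg1 conjg1. Qed.

Lemma twistJ s : twist s ^ x^-1 = twist s.+1.
Proof. by rewrite /twist -conjgM -invMg -expgS. Qed.

Lemma twistMX s : twist s * x ^+ s = x ^+ s * v.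
Proof. by rewrite /twist conjgE invgK -!mulgA mulVg mulg1. Qed.

Lemma chain_sub m : chain m \subset V.
Proof. by elim: m => //= m IHm; rewrite join_subG IHm cycle_subG twist_in. Qed.

Lemma chain_mono m n : m <= n -> chain m \subset chain n.
Proof.
move=> /subnK <-; elim: (n - m) => [|k IHk]; first by rewrite add0n.
by rewrite addSn (subset_trans IHk) //= joing_subl.
Qed.

Lemma twist_in_chainS s : twist s \in chain s.+1.
Proof. by rewrite /= mem_gen // inE cycle_id orbT. Qed.

Lemma mem_chainS m t :
  t \in chain m.+1 -> exists2 t0, t0 \in chain m & t \in [set t0; t0 * twist m].
Proof.
have cVtw : commute (chain m) <[twist m]>.
  apply/normC/cents_norm/(centSS (chain_sub m) _ cVV).
  by rewrite cycle_subG twist_in.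
rewrite /= comm_joingE // => /mulsgP[t0 c Ct0 /cycleP[i ->] ->]; exists t0 => //.
rewrite -(expg_mod i (sqrV (twist_in m))).
by rewrite modn2; case: (odd i); rewrite !inE /= ?expg0 ?expg1 ?mulg1 eqxx ?orbT.
Qed.

Let cxz : commute x z.
Proof. by case/cycleP: zx => i ->; apply: commuteX. Qed.

(* Inserting v z or (v z)^-1 before the (s+1)-th letter x toggles the factor twist s,
   since twist s * x^s = x^s * v. *)
Lemma sweep m t : t \in chain m ->
  exists2 u, u \in U & exists b : bool, u^-1 * t * (x ^+ m * z ^+ b) \in ball X (2 * m).
Proof.
elim: m t => [|m IHm] t.
  by move=> Ut; exists t => //; exists false; rewrite mulVg mul1g mulg1 mem_ball1.
have Bstep n g s : g \in ball X n -> s \in X :|: X^-1 -> g * s * x \in ball X n.+2.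
  by move=> Bg Ss; rewrite mem_ballMx ?mem_ballMr.
have shift t0 : t0 * twist m * x ^+ m.+1 = t0 * x ^+ m * v * x.
  by rewrite expgSr mulgA -(mulgA t0 (twist m)) twistMX mulgA.
case/mem_chainS => t0 /IHm[u Uu [b Bt0]] /set2P[-> | ->]; exists u => //.
  exists b; rewrite mulnS add2n (subsetP (ballS _ _)) //.
  have -> : u^-1 * t0 * (x ^+ m.+1 * z ^+ b) = u^-1 * t0 * (x ^+ m * z ^+ b) * x.
    by rewrite expgSr -!mulgA (commuteX b cxz).
  exact: mem_ballMx.
exists (~~ b); rewrite mulnS add2n; case: b Bt0 => Bt0 /=.
  have -> : u^-1 * (t0 * twist m) * (x ^+ m.+1 * z ^+ false) =
            u^-1 * t0 * (x ^+ m * z ^+ true) * (v * z)^-1 * x.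
    rewrite expg0 expg1 !mulg1 (mulgA u^-1 t0 (twist m)) shift invMg (invV Vv).
    by rewrite !mulgA mulgK.
  by rewrite Bstep // inE mem_invg invgK Xvz orbT.
have -> : u^-1 * (t0 * twist m) * (x ^+ m.+1 * z ^+ true) =
          u^-1 * t0 * (x ^+ m * z ^+ false) * (v * z) * x.
  rewrite expg0 expg1 mulg1 mulgA (mulgA u^-1 t0 (twist m)) shift.
  by rewrite -!mulgA cxz.
by rewrite Bstep // inE Xvz.
Qed.

Lemma chain_sub_ball m k :
  U \subset ball X (2 * k) * <[x]> -> chain m \subset ball X (2 * (m + k)) * <[x]>.
Proof.
move=> sUB; apply/subsetP => t Ct; have [u Uu [b]] := sweep Ct.
have: x ^+ m * z ^+ b \in <[x]> by rewrite groupM ?mem_cycle ?groupX.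
move: (x ^+ m * z ^+ b) => c xc Bt.
have Vt := subsetP (chain_sub m) t Ct; have Vu := subsetP sUV u Uu.
have -> : t = u^-1 * t * c * u ^ c * c^-1.
  by rewrite conjgE !mulgA !mulgK -mulgA (centsP cVV t Vt u Vu) mulKg.
have Uuc : u ^ c \in U by rewrite memJ_norm // (subsetP _ c xc) ?cycle_subG.
have sBBB : ball X (2 * m) * (ball X (2 * k) * <[x]>) * <[x]> \subset
            ball X (2 * (m + k)) * <[x]>.
  by rewrite -!mulgA mulGid mulgA mulnDr; apply/mulSg/mulg_ball.
apply: (subsetP sBBB); rewrite mem_mulg ?groupV //.
by rewrite mem_mulg // (subsetP sUB).
Qed.

Lemma card_chain m : (forall s, s < m -> twist s \notin chain s) ->
  2 ^ m * #|U| <= #|chain m|.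
Proof.
elim: m => [|m IHm] notCtw; first by rewrite mul1n.
have sCmS : chain m \subset chain m.+1 := chain_mono (leqnSn m).
rewrite -(Lagrange sCmS) expnS -mulnA mulnC leq_mul ?IHm //.
  by move=> s lt_sm; rewrite notCtw // ltnS ltnW.
rewrite indexg_gt1; apply: contra (notCtw m (ltnSn m)) => sCSm.
exact: subsetP sCSm _ (twist_in_chainS m).
Qed.

Lemma chain_normX m : twist m \in chain m -> x \in 'N(chain m).
Proof.
move=> Ctw; have sCJ s : s <= m -> chain s :^ x^-1 \subset chain m.
  elim: s => [|s IHs] le_sm.
    by rewrite (normP _) ?groupV // chain_mono.
  rewrite /= conjYg join_subG IHs 1?ltnW // -cycleJ cycle_subG twistJ.
  move: le_sm; rewrite leq_eqVlt => /predU1P[-> // | lt_sm].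
  exact: subsetP (chain_mono lt_sm) _ (twist_in_chainS s.+1).
by rewrite -groupV inE sCJ.
Qed.

End Chain.

Hypotheses (sXVx : X \subset V * <[x]>) (sVX : V \subset <<X>>).

Lemma generator_outside (U : {group gT}) :
    U \subset V -> V :&: <[x]> \subset U -> x \in 'N(U) -> ~~ (V \subset U) ->
  exists2 y, y \in X & y \notin U * <[x]>.
Proof.
move=> sUV sVxU nUx nsVU; apply/subsetPn; apply: contra nsVU => sXUx.
have nUcx : <[x]> \subset 'N(U) by rewrite cycle_subG.
have sVUx : V \subset U * <[x]>.
  by rewrite -norm_joinEr // (subset_trans sVX) ?gen_subG //= norm_joinEr.
by rewrite -(setIidPl sVUx) setIC -group_modl // setIC mulGSid.
Qed.

Lemma covered_grow (U : {group gT}) k :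
    U \subset V -> V :&: <[x]> \subset U -> x \in 'N(U) -> covered U k ->
    ~~ (V \subset U) ->
  exists (U' : {group gT}) k',
    [/\ U' \subset V, U \subset U', x \in 'N(U'), #|U| < #|U'| & covered U' k'].
Proof.
move=> sUV sVxU nUx /andP[le_kU sUB] nsVU.
have [y Xy notUxy] := generator_outside sUV sVxU nUx nsVU.
have [v z Vv zx def_y] := mulsgP (subsetP sXVx y Xy).
have notUv : v \notin U by apply: contra notUxy => Uv; rewrite def_y mem_mulg.
rewrite def_y in Xy.
have exCtw : exists m, twist v m \in chain U v m.
  exists #[x]; rewrite twist_order -[v in v \in _](twist0 v).
  exact: subsetP (chain_mono _ _ (order_gt0 x)) _ (twist_in_chainS _ _ _).
have [m Ctw minCtw] := ex_minnP exCtw.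
have m_gt0 : 0 < m by case: m Ctw {minCtw} => //; rewrite /= twist0 (negPf notUv).
have le_Cm : 2 ^ m * #|U| <= #|chain U v m|.
  by apply: card_chain => s; apply: contraTN => /minCtw; rewrite leqNgt.
exists (chain U v m), (k + m); split.
- exact: chain_sub.
- exact: (@chain_mono U v 0 m).
- exact: chain_normX.
- apply: leq_trans le_Cm; rewrite -[ltnLHS]mul1n ltn_pmul2r ?cardG_gt0 //.
  by rewrite -[ltnLHS](expn0 2) ltn_exp2l.
- rewrite /covered expnD mulnC (leq_trans _ le_Cm) ?leq_mul2l ?le_kU ?orbT //.
  by rewrite addnC (chain_sub_ball sUV nUx Vv zx Xy).
Qed.

Lemma covered_full : exists k, covered V k.
Proof.
suff IH N (U : {group gT}) k : #|V| - #|U| < N -> U \subset V ->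
    V :&: <[x]> \subset U -> x \in 'N(U) -> covered U k -> exists k, covered V k.
  apply: (IH #|V|.+1 (V :&: <[x]>)%G 0).
  - by rewrite ltnS leq_subr.
  - exact: subsetIl.
  - exact: subxx.
  - by rewrite -cycle_subG normsI ?normG ?cycle_subG.
  - by rewrite /covered cardG_gt0 mul1g subsetIr.
elim: N U k => // N IHN U k lt_VU_N sUV sVxU nUx covUk.
have [sVU | nsVU] := boolP (V \subset U).
  by exists k; rewrite (_ : V = U :> {set gT}) //; apply/eqP; rewrite eqEsubset sVU.
have [U' [k' [sU'V sUU' nU'x lt_UU' covU']]] := covered_grow sUV sVxU nUx covUk nsVU.
apply: (IHN U' k') => //; last exact: subset_trans sUU'.
have lt_UV := leq_trans lt_UU' (subset_leq_card sU'V).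
exact: leq_trans (ltn_sub2l lt_UV lt_UU') lt_VU_N.
Qed.

Theorem abelem_mul_cycle_sub_ball n :
  #|V| <= 2 ^ n -> V * <[x]> \subset ball X (2 * n + #[x].-1).
Proof.
move=> le_V_2n; have [k /andP[le_2k_V sVB]] := covered_full.
have le_kn : k <= n by rewrite -(@leq_exp2l 2) ?(leq_trans le_2k_V).
apply: subset_trans (mulSg _ sVB) _; rewrite -mulgA mulGid.
apply: subset_trans (mulgS _ (cycle_sub_ball Xx)) _.
apply: subset_trans (mulg_ball _ _ _) (ball_mono _ _).
by rewrite leq_add2r leq_mul2l le_kn.
Qed.

End AbelemExtension.

Section WreathBase.
Variable p : nat.
Implicit Types (g : {perm 'I_p * bool}) (a : 'I_p * bool).

Definition base_set := [set g : {perm 'I_p * bool} | [forall a, (g a).1 == a.1]].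

Lemma group_set_base : group_set base_set.
Proof.
apply/group_setP; split; first by rewrite inE; apply/forallP => a; rewrite perm1.
move=> g h; rewrite !inE => /forallP bg /forallP bh; apply/forallP => a.
by rewrite permM (eqP (bh _)) (eqP (bg _)).
Qed.

Canonical base := Group group_set_base.

Lemma base_fst g a : g \in base -> (g a).1 = a.1.
Proof. by rewrite inE => /forallP /(_ a) /eqP. Qed.

Lemma baseE g a : g \in base -> g a = (a.1, a.2 (+) (g (a.1, false)).2).
Proof.
case: a => i b bg /=; have g_if := base_fst (i, false) bg.
case: b => /=; last by move: g_if; case: (g (i, false)) => j c /= ->.
have g_it := base_fst (i, true) bg.
have : g (i, true) != g (i, false) by apply/eqP => /perm_inj.
move: g_it g_if; case: (g (i, true)) => j1 c1; case: (g (i, false)) => j2 c2 /= -> ->.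
by case: c1; case: c2; rewrite ?eqxx.
Qed.

Lemma base_abelem : 2.-abelem base.
Proof.
apply/(abelemP (isT : prime 2)); split.
  apply/centsP => g bg h bh; apply/permP => a; rewrite !permM.
  rewrite (baseE (h a) bg) (baseE (g a) bh) (base_fst _ bg) (base_fst _ bh).
  by rewrite (baseE a bg) (baseE a bh) /= -!addbA (addbC (g _).2).
move=> g bg; apply/permP => a; rewrite expgS expg1 permM perm1.
by rewrite (baseE (g a) bg) (base_fst _ bg) (baseE a bg) /= addbK; case: a.
Qed.

Lemma card_base : #|base| <= 2 ^ p.
Proof.
pose code g := [ffun i : 'I_p => (g (i, false)).2].
rewrite -(card_in_imset (f := code) (D := base)).
  by rewrite (leq_trans (max_card _)) // card_ffun card_bool card_ord.
move=> g h bg bh /ffunP code_gh; apply/permP => a.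
by rewrite (baseE a bg) (baseE a bh); have := code_gh a.1; rewrite !ffunE => ->.
Qed.

Lemma flip0_base : flip0 p \in base.
Proof. by rewrite inE; apply/forallP => a; rewrite permE. Qed.

Lemma rot_norm_base : rot p \in 'N(base).
Proof.
have rot_fst a : (rot p a).1 = ordS a.1 by rewrite permE.
have Jbase g : g \in base -> g ^ rot p \in base.
  move=> bg; rewrite inE; apply/forallP => a.
  by rewrite conjgE !permM rot_fst (base_fst _ bg) -rot_fst permKV.
by rewrite inE; apply/subsetP => _ /imsetP[g bg ->]; apply: Jbase.
Qed.

Lemma rot_order_dvd : #[rot p] %| p.
Proof.
have iter_ordS n (i : 'I_p) : val (iter n (@ordS p) i) = (i + n) %% p.
  elim: n => [|n IHn] /=; first by rewrite addn0 modn_small.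
  by rewrite IHn addnS -addn1 modnDml addn1.
have iter_rot n a : iter n (rot p) a = (iter n (@ordS p) a.1, a.2).
  by elim: n => [|n /= ->]; [case: a | rewrite permE].
rewrite order_dvdn; apply/eqP/permP => [[i b]].
rewrite permX perm1 iter_rot; congr (_, _).
by apply: val_inj; rewrite iter_ordS modnDr modn_small.
Qed.

Lemma W_sub_base_rot : W p \subset base * <[rot p]>.
Proof.
have nbr : <[rot p]> \subset 'N(base) by rewrite cycle_subG rot_norm_base.
rewrite -norm_joinEr // /W /= gen_subG subUset !sub1set.
by rewrite (subsetP (joing_subl _ _) _ flip0_base) (subsetP (joing_subr _ _)) ?cycle_id.
Qed.

Lemma W_norm_base : W p \subset 'N(base).
Proof.
apply: subset_trans W_sub_base_rot _.
by rewrite mul_subG ?normG ?cycle_subG ?rot_norm_base.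
Qed.

Lemma quotient_W_sub_cycle : W p / base \subset <[coset base (rot p)]>.
Proof.
rewrite -quotient_cycle ?rot_norm_base // -(quotientMidl base).
exact/quotientS/W_sub_base_rot.
Qed.

Lemma order_coset_rot_dvd : #[coset base (rot p)] %| p.
Proof. exact: dvdn_trans (morph_order _ rot_norm_base) rot_order_dvd. Qed.

Lemma order_W_dvd g : g \in W p -> #[g] %| p * 2.
Proof.
move=> Wg; have Ng := subsetP W_norm_base g Wg.
have bgp : g ^+ p \in base.
  apply: coset_idr; first by rewrite groupX.
  apply/eqP; rewrite morphX // -order_dvdn (dvdn_trans _ order_coset_rot_dvd) //.
  by apply: order_dvdG; apply: (subsetP quotient_W_sub_cycle); rewrite mem_quotient.
by rewrite order_dvdn expgM; case/(abelemP (isT : prime 2)): base_abelem => _ ->.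
Qed.

Hypothesis p_pr : prime p.

Lemma W_sub_base_cycle g : g \in W p -> g \notin base -> W p \subset base * <[g]>.
Proof.
move=> Wg notbg; have Ng := subsetP W_norm_base g Wg.
have Qg : coset base g \in <[coset base (rot p)]>.
  by rewrite (subsetP quotient_W_sub_cycle) ?mem_quotient.
have ord_g : #[coset base g] = p.
  apply/(prime_nt_dvdP p_pr); last exact: dvdn_trans (order_dvdG Qg) order_coset_rot_dvd.
  by rewrite order_eq1; apply: contra notbg; move/eqP; apply: coset_idr.
have cyc_g : <[coset base (rot p)]> = <[coset base g]>.
  apply/eqP; rewrite eq_sym eqEcard cycle_subG Qg -!orderE ord_g.
  exact: dvdn_leq (prime_gt0 p_pr) order_coset_rot_dvd.
rewrite -quotientK ?cycle_subG // -sub_morphim_pre ?W_norm_base //.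
by rewrite quotient_cycle // -cyc_g quotient_W_sub_cycle.
Qed.

End WreathBase.

Section QuotientByCenter.
Variable p : nat.

Definition base_Gp := ((W p :&: base p) / 'Z(W p))%G.

Lemma W_norm_center : W p \subset 'N('Z(W p)).
Proof. exact/normal_norm/center_normal. Qed.

Lemma base_Gp_abelem : 2.-abelem base_Gp.
Proof. exact/quotient_abelem/(abelemS (subsetIr _ _) (base_abelem p)). Qed.

Lemma card_base_Gp : #|base_Gp| <= 2 ^ p.
Proof.
apply: leq_trans (leq_quotient _ _) _.
exact: leq_trans (subset_leq_card (subsetIr _ _)) (card_base p).
Qed.

Lemma base_Gp_sub : base_Gp \subset Gp p.
Proof. exact/quotientS/subsetIl. Qed.

Lemma Gp_norm_base_Gp : Gp p \subset 'N(base_Gp).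
Proof. exact/quotient_norms/normsI/W_norm_base/normG. Qed.

Lemma order_coset_W_dvd g : g \in W p -> #[coset 'Z(W p) g] %| p * 2.
Proof.
move=> Wg; apply: dvdn_trans (order_W_dvd Wg).
exact: morph_order (subsetP W_norm_center g Wg).
Qed.

Lemma Gp_sub_base_cycle g : prime p -> g \in W p -> g \notin base p ->
  Gp p \subset base_Gp * <[coset 'Z(W p) g]>.
Proof.
move=> p_pr Wg notbg; have Ng := subsetP W_norm_center g Wg.
rewrite -quotient_cycle // -quotientMl ?(subset_trans (subsetIl _ _) W_norm_center) //.
rewrite quotientS // group_modr ?cycle_subG // subsetI subxx.
exact: W_sub_base_cycle.
Qed.

Lemma diam_max_Gp : prime p -> diam_max (Gp p : {set _}) <= 2 * p + (p * 2).-1.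
Proof.
move=> p_pr; apply/bigmax_leqP => X /andP[sXG /eqP genX]; apply: diam_le.
suff [x Xx /andP[sGVx dvd_x]] : exists2 x, x \in 1 |: X &
    (Gp p \subset base_Gp * <[x]>) && (#[x] %| p * 2).
  have nVx : x \in 'N(base_Gp).
    by case/setU1P: Xx => [-> | /(subsetP sXG)/(subsetP Gp_norm_base_Gp)].
  have sVX : base_Gp \subset <<X>> by rewrite genX base_Gp_sub.
  apply: subset_trans sGVx (subset_trans (abelem_mul_cycle_sub_ball base_Gp_abelem nVx
    Xx (subset_trans sXG sGVx) sVX card_base_Gp) (ball_mono _ _)).
  rewrite leq_add2l -!subn1 leq_sub2r //.
  by rewrite dvdn_leq ?muln_gt0 ?prime_gt0.
have [sXV | /subsetPn[x Xx notVx]] := boolP (X \subset base_Gp).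
  by exists 1; rewrite ?setU11 // cycle1 mulg1 -genX gen_subG sXV order1 dvd1n.
have [g Ng Wg def_x] := morphimP (subsetP sXG x Xx).
exists x; first exact: setU1r.
rewrite def_x Gp_sub_base_cycle ?order_coset_W_dvd //.
by apply: contra notVx => bg; rewrite def_x mem_quotient // inE Wg.
Qed.

End QuotientByCenter.

Local Close Scope group_scope.

Theorem theorem4 (p : nat) (hp : prime p) (hodd : odd p) :
  2 * diam_max (Gp p : {set _}) <= 13 * (p - 1).
Proof.
have p_gt2 : 2 < p.
  by move: (prime_gt1 hp) hodd; rewrite leq_eqVlt => /predU1P[<- | ].
apply: leq_trans (leq_mul (leqnn 2) (diam_max_Gp hp)) _.
lia.
Qed.
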